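(* Let $A_3$ be the complex $3$-Lie algebra with basis $\{e_1,e_2,e_3\}$ whose only nonzero bracket of basis elements (up to skew-symmetry) is $[e_1,e_2,e_3]=e_1$, and let $(A_3,\cdot,[\cdot,\cdot,\cdot])$ be a transposed Poisson $3$-Lie algebra. Then there exist $\beta_{21}^2,\beta_{22}^2,\beta_{23}^2,\beta_{31}^2,\beta_{32}^2,\beta_{33}^2,\beta_{31}^3,\beta_{32}^3,\beta_{33}^3\in\mathbb{C}$ such that $e_1\cdot e_1=0$ and $$\begin{aligned} e_1\cdot e_2&=\tfrac{\beta_{22}^2+\beta_{33}^2}{2}e_1, & e_1\cdot e_3&=\tfrac{\beta_{32}^2+\beta_{33}^3}{2}e_1,\\ e_2\cdot e_2&=\beta_{21}^2e_1+\beta_{22}^2e_2+\beta_{23}^2e_3, & e_2\cdot e_3&=\beta_{31}^2e_1+\beta_{32}^2e_2+\beta_{33}^2e_3,\\ e_3\cdot e_3&=\beta_{31}^3e_1+\beta_{32}^3e_2+\beta_{33}^3e_3. \end{aligned}$$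
   Context: A transposed Poisson $3$-Lie algebra is a triple $(A,\cdot,[\cdot,\cdot,\cdot])$ where $(A,\cdot)$ is a commutative algebra (a commutative bilinear product; associativity is not required here), $(A,[\cdot,\cdot,\cdot])$ is a $3$-Lie algebra, and $3u\cdot[x,y,z]=[u\cdot x,y,z]+[x,u\cdot y,z]+[x,y,u\cdot z]$ for all $x,y,z,u\in A$. *)

From HB Require Import structures.
From mathcomp Require Import all_boot all_order all_algebra.
From mathcomp Require Import complex.
From mathcomp Require Import Rstruct.
Set Implicit Arguments. Unset Strict Implicit. Unset Printing Implicit Defensive.
Import Order.TTheory GRing.Theory Num.Theory.
Local Open Scope ring_scope.

Notation C := (Rdefinitions.R)[i].

(* The underlying vector space of A_3 : C^3 (row vectors), basis e_1,e_2,e_3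
   being e 0, e 1, e 2. *)
Notation A3 := 'rV[C]_3.
Definition e (i : 'I_3) : A3 := delta_mx 0 i.

(* The ternary bracket of A_3: the trilinear skew-symmetric extension of
   [e1,e2,e3] = e1 (all other brackets of basis elements zero up to skew-symmetry),
   i.e. [x,y,z] = (sum over permutations of the structure constants) e1. *)
Definition br3 (x y z : A3) : A3 :=
  (x 0 0 * (y 0 1 * z 0 2 - y 0 2 * z 0 1)
   - x 0 1 * (y 0 0 * z 0 2 - y 0 2 * z 0 0)
   + x 0 2 * (y 0 0 * z 0 1 - y 0 1 * z 0 0)) *: e 0.

Definition commutative_bilinear (mul : A3 -> A3 -> A3) : Prop :=
  (forall (a : C) (x y z : A3), mul (a *: x + y) z = a *: mul x z + mul y z) /\
  (forall x y : A3, mul x y = mul y x).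

Definition tp3_compatible (mul : A3 -> A3 -> A3) : Prop :=
  forall x y z u : A3,
    3%:R *: mul u (br3 x y z)
    = br3 (mul u x) y z + br3 x (mul u y) z + br3 x y (mul u z).

Definition transposed_Poisson_3Lie_on_A3 (mul : A3 -> A3 -> A3) : Prop :=
  commutative_bilinear mul /\ tp3_compatible mul.

(** Taking [x, y, z] = [e1, e2, e3] in the compatibility identity, every
    bracket on the right is a multiple of [e1]:
    [3 u.e1 = ((u.e1)_1 + (u.e2)_2 + (u.e3)_3) e1].  Hence [u.e1 = c e1] with
    [2 c = (u.e2)_2 + (u.e3)_3].  For [u = e2, e3] this is the claimed form of
    [e1.e2] and [e1.e3]; for [u = e1], commutativity puts [e1.e2] and [e1.e3]
    in [C e1], so [(e1.e2)_2 = (e1.e3)_3 = 0] and [e1.e1 = 0]. *)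
From HB Require Import structures.
From mathcomp Require Import all_boot all_order all_algebra.
From mathcomp Require Import complex Rstruct.
From mathcomp Require Import ring.
Import GRing.Theory Num.Theory.
Local Open Scope ring_scope.

Lemma e_coord (i j : 'I_3) : e i 0 j = (i == j)%:R.
Proof. by rewrite /e mxE eqxx eq_sym. Qed.

Lemma scale_e_coord (a : C) (i j : 'I_3) : (a *: e i) 0 j = a * (i == j)%:R.
Proof. by rewrite mxE e_coord. Qed.

Lemma row3_decomp (v : A3) : v = v 0 0 *: e 0 + v 0 1 *: e 1 + v 0 2 *: e 2.
Proof.
rewrite {1}[v]row_sum_delta (big_ord_recl 2) (big_ord_recl 1) big_ord1 addrA.
by congr (_ + _ *: _ + _ *: _); congr (v 0 _); apply: val_inj.
Qed.

Lemma br3_e1e2 (v : A3) : br3 v (e 1) (e 2) = v 0 0 *: e 0.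
Proof. by rewrite /br3 !e_coord /=; congr (_ *: _); ring. Qed.

Lemma br3_e0e2 (v : A3) : br3 (e 0) v (e 2) = v 0 1 *: e 0.
Proof. by rewrite /br3 !e_coord /=; congr (_ *: _); ring. Qed.

Lemma br3_e0e1 (v : A3) : br3 (e 0) (e 1) v = v 0 2 *: e 0.
Proof. by rewrite /br3 !e_coord /=; congr (_ *: _); ring. Qed.

Lemma br3_e0e1e2 : br3 (e 0) (e 1) (e 2) = e 0.
Proof. by rewrite br3_e1e2 e_coord scale1r. Qed.

Section Compatibility.

Variable mul : A3 -> A3 -> A3.
Hypothesis mul_compat : tp3_compatible mul.

Lemma mul_e0_scaled (u : A3) :
  3%:R *: mul u (e 0)
  = (mul u (e 0) 0 0 + mul u (e 1) 0 1 + mul u (e 2) 0 2) *: e 0.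
Proof. by rewrite -{1}br3_e0e1e2 mul_compat br3_e1e2 br3_e0e2 br3_e0e1 !scalerDl. Qed.

Lemma mul_e0 (u : A3) :
  mul u (e 0) = ((mul u (e 1) 0 1 + mul u (e 2) 0 2) / 2%:R) *: e 0.
Proof.
set s := mul u (e 1) 0 1 + mul u (e 2) 0 2.
have n3 : (3%:R : C) != 0 by rewrite pnatr_eq0.
have n2 : (2%:R : C) != 0 by rewrite pnatr_eq0.
have colinear : mul u (e 0) = (mul u (e 0) 0 0 + s) / 3%:R *: e 0.
  rewrite -{1}[mul u (e 0)](scalerK n3) mul_e0_scaled scalerA.
  by congr (_ *: _); rewrite /s; ring.
have coord0 : mul u (e 0) 0 0 = (mul u (e 0) 0 0 + s) / 3%:R.
  by rewrite {1}colinear scale_e_coord mulr1.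
rewrite colinear -coord0; congr (_ *: _); move: (mul u (e 0) 0 0) coord0 => c.
move=> /(congr1 ( *%R 3%:R)); rewrite mulrCA divff // mulr1 => c3.
apply: (mulfI n2); rewrite mulrCA divff // mulr1.
by apply: (addrI c); rewrite -c3; ring.
Qed.

Lemma mul_e0_coord (u : A3) (j : 'I_3) : j != 0 -> mul u (e 0) 0 j = 0.
Proof. by move=> j0; rewrite mul_e0 scale_e_coord eq_sym (negbTE j0) mulr0. Qed.

End Compatibility.

Theorem lemma3p5 (mul : A3 -> A3 -> A3) :
  transposed_Poisson_3Lie_on_A3 mul ->
  exists b21_2 b22_2 b23_2 b31_2 b32_2 b33_2 b31_3 b32_3 b33_3 : C,
    mul (e 0) (e 0) = 0 /\
        mul (e 0) (e 1) = ((b22_2 + b33_2) / 2%:R) *: e 0 /\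
        mul (e 0) (e 2) = ((b32_2 + b33_3) / 2%:R) *: e 0 /\
        mul (e 1) (e 1) = b21_2 *: e 0 + b22_2 *: e 1 + b23_2 *: e 2 /\
        mul (e 1) (e 2) = b31_2 *: e 0 + b32_2 *: e 1 + b33_2 *: e 2 /\
      mul (e 2) (e 2) = b31_3 *: e 0 + b32_3 *: e 1 + b33_3 *: e 2.
Proof.
move=> [[_ mulC] compat].
exists (mul (e 1) (e 1) 0 0), (mul (e 1) (e 1) 0 1), (mul (e 1) (e 1) 0 2),
  (mul (e 1) (e 2) 0 0), (mul (e 1) (e 2) 0 1), (mul (e 1) (e 2) 0 2),
  (mul (e 2) (e 2) 0 0), (mul (e 2) (e 2) 0 1), (mul (e 2) (e 2) 0 2).
split; last split; last split; try by split; rewrite -?row3_decomp.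
- rewrite (mul_e0 _ compat) [mul (e 0) (e 1)]mulC [mul (e 0) (e 2)]mulC.
  by rewrite !(mul_e0_coord _ compat) // add0r mul0r scale0r.
- by rewrite mulC (mul_e0 _ compat).
- by rewrite mulC (mul_e0 _ compat) [mul (e 2) (e 1)]mulC.
Qed.
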